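(* For $n\geq 0$ let \[ F_n=\sum_{T}\frac{(n+1)!}{2^n}\prod_{v\in T}\left(1+\frac{1}{h(v)}\right), \] the sum ranging over all binary trees $T$ with $n$ vertices (so $F_0=1$, the empty tree contributing an empty product). Then for every $n\geq 1$, \[ F_n=\frac{n+1}{2n}\sum_{k=0}^{n-1}\binom{n+1}{k+1}F_kF_{n-k-1}. \]
   Context: A binary tree is a rooted tree in which each vertex has a left subtree and a right subtree, each possibly empty; binary trees differing in whether a child is a left or a right child are distinct. For a vertex $v$ of a binary tree $T$, the hook length $h(v)$ is the number of descendants of $v$ in $T$, including $v$ itself. *)

From HB Require Import structures.
From mathcomp Require Import all_boot all_order all_algebra.
Set Implicit Arguments. Unset Strict Implicit. Unset Printing Implicit Defensive.
Import Order.TTheory GRing.Theory Num.Theory.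

Inductive btree : Type := BLeaf | BNode of btree & btree.

Fixpoint btree_eqb (s t : btree) : bool :=
  match s, t with
  | BLeaf, BLeaf => true
  | BNode l1 r1, BNode l2 r2 => btree_eqb l1 l2 && btree_eqb r1 r2
  | _, _ => false
  end.

Lemma btree_eqbP : Equality.axiom btree_eqb.
Proof.
elim=> [|l1 IHl r1 IHr] [|l2 r2] /=; try by constructor.
case: (IHl l2) => [->|H]; last by constructor; case.
case: (IHr r2) => [->|H]; last by constructor; case.
by constructor.
Qed.

HB.instance Definition _ := hasDecEq.Build btree btree_eqbP.

Fixpoint bsize (t : btree) : nat :=
  match t with BLeaf => 0 | BNode l r => (bsize l + bsize r).+1 end.

(* product over vertices v of (1 + 1/h(v)), h(v) = size of subtree rooted at v *)
Fixpoint hookprod (t : btree) : rat :=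
  match t with
  | BLeaf => 1
  | BNode l r => (1 + ((bsize t)%:R)^-1) * hookprod l * hookprod r
  end.

Fixpoint trees_ht (m : nat) : seq btree :=
  match m with
  | 0 => [:: BLeaf]
  | m'.+1 => BLeaf :: [seq BNode l r | l <- trees_ht m', r <- trees_ht m']
  end.

(* all binary trees with exactly n vertices, each listed once
   (a tree with n vertices has height <= n) *)
Definition trees (n : nat) : seq btree :=
  undup [seq t <- trees_ht n | bsize t == n].

Definition F (n : nat) : rat :=
  ((n.+1)`!)%:R / (2 ^ n)%:R * \sum_(t <- trees n) hookprod t.

From mathcomp Require Import all_boot all_order all_algebra.
From mathcomp Require Import zify ring.
Import Order.TTheory GRing.Theory Num.Theory.
Local Open Scope ring_scope.

(* Splitting a tree with n+1 vertices at its root into a left subtree with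
   k vertices and a right one with n-k vertices gives, for the hook sums
   G n = \sum_T \prod_v (1 + 1/h(v)), the recurrence
   G (n+1) = (1 + 1/(n+1)) \sum_k G k G (n-k), since the root has hook n+1.
   Multiplying by (n+2)!/2^(n+1) and distributing the factorials as
   (n+2)! = C(n+2, k+1) (k+1)! (n-k+1)! turns it into the stated recurrence. *)

Fixpoint height (t : btree) : nat :=
  match t with BLeaf => 0 | BNode l r => (maxn (height l) (height r)).+1 end.

Lemma height_le_size t : (height t <= bsize t)%N.
Proof. by elim: t => //= l IHl r IHr; lia. Qed.

Lemma mem_trees_ht m t : (t \in trees_ht m) = (height t <= m)%N.
Proof.
elim: m t => [|m IHm] [|l r] //=; rewrite in_cons /=.
apply/allpairsP/idP => [[[l' r'] /= [Hl Hr [-> ->]]]|Hlr].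
  by move: Hl Hr; rewrite !IHm; lia.
by exists (l, r); rewrite /= !IHm; split => //; lia.
Qed.

Lemma mem_trees n t : (t \in trees n) = (bsize t == n).
Proof.
rewrite mem_undup mem_filter mem_trees_ht.
by case: eqP => //= <-; apply: height_le_size.
Qed.

Lemma uniq_flatten_keyed (A B : eqType) (key : B -> A) (s : seq A) (g : A -> seq B) :
  uniq s -> (forall x, uniq (g x)) -> (forall x y, y \in g x -> key y = x) ->
  uniq (flatten (map g s)).
Proof.
move=> + Ug Kg; elim: s => //= x s IHs /andP [xNs Us].
rewrite cat_uniq Ug IHs // andbT /=.
apply/hasP => -[y /flattenP [_ /mapP [z zs ->] yz] yx].
by move: xNs; rewrite -(Kg _ _ yx) (Kg _ _ yz) zs.
Qed.

Definition left_size (t : btree) : nat := if t is BNode l _ then bsize l else 0.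

Definition root_splits (n : nat) : seq btree :=
  flatten [seq [seq BNode l r | l <- trees k, r <- trees (n - k)] | k <- iota 0 n.+1].

Lemma uniq_root_splits n : uniq (root_splits n).
Proof.
apply: (@uniq_flatten_keyed _ _ left_size); first exact: iota_uniq.
  move=> k; apply: allpairs_uniq; try exact: undup_uniq.
  by move=> [l1 r1] [l2 r2] _ _ /= [-> ->].
by move=> k _ /allpairsP [[l r] /= [+ _ ->]]; rewrite mem_trees => /eqP.
Qed.

Lemma mem_root_splits n t : (t \in root_splits n) = (bsize t == n.+1).
Proof.
apply/flattenP/idP => [[_ /mapP [k + ->] /allpairsP [[l r] /= [Hl Hr ->]]]|].
  by rewrite mem_iota; move: Hl Hr; rewrite !mem_trees /= => /eqP -> /eqP ->; lia.
case: t => [|l r] // /eqP [Hsize].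
exists [seq BNode l' r' | l' <- trees (bsize l), r' <- trees (n - bsize l)].
  by apply: (map_f (fun k => [seq BNode l' r' | l' <- trees k, r' <- trees (n - k)]));
    rewrite mem_iota; lia.
by apply: allpairs_f; rewrite mem_trees //; apply/eqP; lia.
Qed.

Lemma perm_trees_succ n : perm_eq (trees n.+1) (root_splits n).
Proof.
apply: uniq_perm; [exact: undup_uniq | exact: uniq_root_splits |].
by move=> t; rewrite mem_root_splits mem_trees.
Qed.

Lemma big_trees_succ (V : nmodType) (f : btree -> V) n :
  \sum_(t <- trees n.+1) f t =
  \sum_(k < n.+1) \sum_(l <- trees k) \sum_(r <- trees (n - k)) f (BNode l r).
Proof.
rewrite (perm_big _ (perm_trees_succ n)) big_flatten big_map.
rewrite -(big_mkord xpredT (fun k =>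
  \sum_(l <- trees k) \sum_(r <- trees (n - k)) f (BNode l r))).
rewrite /index_iota subn0.
by apply: eq_bigr => k _; rewrite big_allpairs_dep.
Qed.

Definition hooksum (n : nat) : rat := \sum_(t <- trees n) hookprod t.

Lemma hooksum_succ n :
  hooksum n.+1 = (1 + n.+1%:R^-1) * \sum_(k < n.+1) hooksum k * hooksum (n - k).
Proof.
rewrite /hooksum big_trees_succ big_distrr; apply: eq_bigr => /= k _.
rewrite big_distrl big_distrr; apply: eq_big_seq => l; rewrite mem_trees => /eqP Hl.
rewrite big_distrr big_distrr; apply: eq_big_seq => r; rewrite mem_trees => /eqP Hr.
by rewrite /= Hl Hr -mulrA subnKC // -ltnS ltn_ord.
Qed.

Lemma pow2_neq0 m : (2 ^ m)%:R != 0 :> rat.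
Proof. by rewrite pnatr_eq0 -lt0n expn_gt0. Qed.

Lemma binomial_F_term m k : (k <= m)%N ->
  'C(m.+2, k.+1)%:R * F k * F (m.+1 - k - 1) =
  (m.+2)`!%:R / (2 ^ m)%:R * (hooksum k * hooksum (m - k)).
Proof.
move=> le_km; rewrite (_ : (m.+1 - k - 1 = m - k)%N); last by lia.
have fact_split : 'C(m.+2, k.+1)%:R * (k.+1)`!%:R * ((m - k).+1)`!%:R = (m.+2)`!%:R :> rat.
  rewrite -!natrM -mulnA -(@bin_fact m.+2 k.+1); last by lia.
  by rewrite subSS subSn.
have pow2_split : (2 ^ k)%:R * (2 ^ (m - k))%:R = (2 ^ m)%:R :> rat.
  by rewrite -natrM -expnD subnKC.
rewrite /F -/(hooksum k) -/(hooksum (m - k)) -fact_split -pow2_split.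
by field; rewrite !pow2_neq0.
Qed.

Theorem mainTheorem2 (n : nat) : (1 <= n)%N ->
  F n = (n.+1)%:R / (2 * n)%:R *
        \sum_(k < n) ('C(n.+1, k.+1))%:R * F k * F (n - k - 1)%N.
Proof.
case: n => [|m] // _.
rewrite (eq_bigr (fun k : 'I_m.+1 =>
          (m.+2)`!%:R / (2 ^ m)%:R * (hooksum k * hooksum (m - k)))); last first.
  by move=> k _; apply: binomial_F_term; rewrite -ltnS.
rewrite -big_distrr /= /F -/(hooksum m.+1) hooksum_succ expnS !natrM.
have m1_neq0 : m.+1%:R != 0 :> rat by rewrite pnatr_eq0.
by field; rewrite pow2_neq0 addrC natr1.
Qed.
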